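(* Let $r\in\mathbb{N}$ and $v\in\mathbb{YF}^r$. Then $$d_r(\varepsilon,v)=d_1(\varepsilon,s(v))\cdot r^{d(v)}=r^{d(v)}\prod_{j=1}^{d(v)}g(v,j).$$
   Context: Fix $r\in\mathbb{N}$. Words and statistics. Consider finite words over $\{1_1,\dots,1_r,2\}$. A letter $1_i$ is a one with digit value $1$; $2$ is a two with digit value $2$. $\varepsilon$ is the empty word. $|x|$ is the sum of digit values, $d(x)$ the number of twos. The graph $\mathbb{YF}^r$. It is the graded graph on all finite words, graded by $|\cdot|$. From $x$ there is a downward edge to every word obtained by one of two operations: (i) delete the leftmost one; (ii) replace a $2$ lying left of the leftmost one (any $2$ if there are no ones) by $1_i$, with arbitrary $i\in\{1,\dots,r\}$. For $r=1$ write $1$ for $1_1$; $\mathbb{YF}=\mathbb{YF}^1$. The map $s:\mathbb{YF}^r\to\mathbb{YF}$ replaces every $1_i$ by $1$. Path counts. $d_r(x,y)$ is the number of downward paths $y=y_n\to\dots\to y_m=x$ in $\mathbb{YF}^r$ with $|y_i|=i$; $d_1$ is the count in $\mathbb{YF}$. The function $g$. Write $x=2\,1^{\beta_m}\,2\cdots2\,1^{\beta_1}\,2\,1^{\beta_0}$ (possibly preceded by a block of ones), where $1^{\beta}$ is a possibly empty block of $\beta$ consecutive ones. For $1\le j\le d(x)$ set $g(x,j)=\beta_0+\dots+\beta_{j-1}+2j-1$. *)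

From mathcomp Require Import all_boot.
Set Implicit Arguments. Unset Strict Implicit. Unset Printing Implicit Defensive.

(* Letters of YF^r: [Some i] is the one 1_{i+1} (i : 'I_r), [None] is the two 2. *)
Definition letter (r : nat) := option 'I_r.
Definition word (r : nat) := seq (letter r).

Definition eps {r} : word r := [::].

Definition dval {r} (a : letter r) : nat := if a is Some _ then 1 else 2.
Definition weight {r} (x : word r) : nat := sumn (map dval x).
Definition ntwos {r} (x : word r) : nat := count (fun a : letter r => a == None) x.

Definition is_one {r} (a : letter r) : bool := if a is Some _ then true else false.

Definition down {r} (x : word r) : seq (word r) :=
  let k := find is_one x in
  let del := if k < size x then [:: take k x ++ drop k.+1 x] else [::] in
  let repl := flatten [seq [seq set_nth None x p (Some i) | i <- enum 'I_r]
                       | p <- iota 0 k & nth None x p == None] in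
  undup (del ++ repl).

(* Every edge lowers |.| by exactly one, so the grading condition |y_i| = i is
   automatic; the fuel |y| bounds the length of any path. *)
Fixpoint npaths {r} (fuel : nat) (x y : word r) : nat :=
  if y == x then 1 else
  match fuel with
  | 0 => 0
  | f.+1 => sumn [seq npaths f x z | z <- down y]
  end.

Definition dpaths {r} (x y : word r) : nat := npaths (weight y) x y.

Definition sproj {r} (x : word r) : word 1 :=
  [seq (if a is Some _ then Some ord0 else None) | a <- x].

(* Blocks of ones: for x = 1^{b} 2 1^{beta_m} 2 ... 2 1^{beta_0},
   blocks (rev x) = [:: beta_0; beta_1; ...; beta_m; b]. *)
Fixpoint blocks {r} (w : word r) : seq nat :=
  match w with
  | [::] => [:: 0]
  | None :: w' => 0 :: blocks w'
  | Some _ :: w' => match blocks w' with b :: bs => b.+1 :: bs | [::] => [:: 1] end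
  end.

Definition beta {r} (x : word r) (k : nat) : nat := nth 0 (blocks (rev x)) k.

Definition gfun {r} (x : word r) (j : nat) : nat :=
  (\sum_(0 <= k < j) beta x k) + 2 * j - 1.

(* Read words from the left. The only neighbour below 1_i u is u, while the
   neighbours below 2u are the r words 1_i u and the words 2z with z below u.
   Since every z below u has |z| = |u| - 1, induction gives for the number P of
   paths down to the empty word P(1_i u) = P(u) and
   P(2u) = r P(u) + r |u| P(u) = r (|u| + 1) P(u).
   So P(v) is r^d(v) times the product, over the twos of v, of one plus the
   weight of the suffix to their right; for r = 1 this is d_1(eps, s(v)), and
   the suffix to the right of the j-th two from the right has weight g(v,j) - 1. *)

From mathcomp Require Import all_boot zify.
Set Implicit Arguments. Unset Strict Implicit. Unset Printing Implicit Defensive.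

Lemma weight_cons r (a : letter r) u : weight (a :: u) = dval a + weight u.
Proof. by []. Qed.

Lemma ntwos_cons r (a : letter r) u : ntwos (a :: u) = (a == None) + ntwos u.
Proof. by []. Qed.

Fixpoint gprod {r} (x : word r) : nat :=
  match x with
  | [::] => 1
  | Some _ :: u => gprod u
  | None :: u => (weight u).+1 * gprod u
  end.

Section Paths.
Variable r : nat.
Implicit Types (x y z u : word r) (i : 'I_r).

Definition down_del x : seq (word r) :=
  let k := find is_one x in
  if k < size x then [:: take k x ++ drop k.+1 x] else [::].

Definition down_repl x : seq (word r) :=
  flatten [seq [seq set_nth None x p (Some i) | i <- enum 'I_r]
          | p <- iota 0 (find is_one x) & nth None x p == None].

Lemma downE x : down x = undup (down_del x ++ down_repl x).
Proof. by []. Qed.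

Lemma down_cons_one i u : down (Some i :: u) = [:: u].
Proof. by rewrite /down /= drop0. Qed.

Lemma down_del_cons_two u : down_del (None :: u) = map (cons None) (down_del u).
Proof. by rewrite /down_del /= ltnS; case: ifP. Qed.

Lemma down_repl_cons_two u : down_repl (None :: u) =
  [seq Some i :: u | i <- enum 'I_r] ++ map (cons None) (down_repl u).
Proof.
rewrite /down_repl /= -[1]/(1 + 0) iotaDl filter_map map_flatten -map_comp.
by congr (_ ++ flatten _); rewrite -map_comp; apply: eq_map => p /=; rewrite -map_comp.
Qed.

Lemma perm_down_raw_cons_two u :
  perm_eq (down_del (None :: u) ++ down_repl (None :: u))
    ([seq Some i :: u | i <- enum 'I_r] ++ map (cons None) (down_del u ++ down_repl u)).
Proof. by rewrite down_del_cons_two down_repl_cons_two map_cat perm_catCA. Qed.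

Lemma uniq_down_raw x : uniq (down_del x ++ down_repl x).
Proof.
elim: x => [|[i|] u IH] //.
rewrite (perm_uniq (perm_down_raw_cons_two u)) cat_uniq.
rewrite !map_inj_uniq ?IH ?andbT -?enumT ?enum_uniq //=; try by move=> ? ? [].
by apply/hasPn => _ /mapP[z _ ->]; apply/mapP => -[].
Qed.

Lemma perm_down_cons_two u :
  perm_eq (down (None :: u))
    ([seq Some i :: u | i <- enum 'I_r] ++ map (cons None) (down u)).
Proof. by rewrite !downE !undup_id ?uniq_down_raw // perm_down_raw_cons_two. Qed.

Lemma weight_down y z : z \in down y -> (weight z).+1 = weight y.
Proof.
elim: y z => [|[i|] u IH] z //; first by rewrite down_cons_one inE => /eqP ->.
rewrite (perm_mem (perm_down_cons_two u)) mem_cat.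
by case/orP=> /mapP[z' z'u ->]; rewrite !weight_cons // -(IH _ z'u).
Qed.

Definition path_count x := r ^ ntwos x * gprod x.

Lemma path_count_nil : path_count [::] = 1.
Proof. by []. Qed.

Lemma path_count_cons_two u : path_count (None :: u) = r * (weight u).+1 * path_count u.
Proof. rewrite /path_count /ntwos /= expnS; lia. Qed.

Lemma sum_path_count_down y :
  y != [::] -> \sum_(z <- down y) path_count z = path_count y.
Proof.
elim: y => [|[i|] u IH] _ //; first by rewrite down_cons_one big_seq1.
rewrite (perm_big _ (perm_down_cons_two u)) big_cat /= !big_map path_count_cons_two.
rewrite (eq_bigr (fun=> path_count u)) // -enumT big_enum sum_nat_const card_ord.
have [->|u0] := eqVneq u [::].
  by rewrite (_ : down [::] = [::]) // big_nil addn0 path_count_nil !muln1.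
under eq_big_seq => z zu do rewrite path_count_cons_two (weight_down zu).
by rewrite -big_distrr IH //= mulnSr mulnDl addnC.
Qed.

Lemma npaths_eps f y : weight y <= f -> npaths f eps y = path_count y.
Proof.
elim: f y => [|f IH] [|a u] //; first by case: a.
move=> le_f; rewrite -sum_path_count_down //= sumnE big_map.
apply: eq_big_seq => z /weight_down z_a_u; apply: IH; lia.
Qed.

Lemma dpaths_eps y : dpaths eps y = path_count y.
Proof. exact: npaths_eps. Qed.

End Paths.

Lemma weight_sproj r (x : word r) : weight (sproj x) = weight x.
Proof. by elim: x => [|[i|] u IH] //; rewrite !weight_cons -IH. Qed.

Lemma gprod_sproj r (x : word r) : gprod (sproj x) = gprod x.
Proof. by elim: x => [|[i|] u IH] //=; rewrite IH weight_sproj. Qed.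

Lemma weight_count r (x : word r) : weight x = count is_one x + 2 * ntwos x.
Proof. by elim: x => [|[i|] u IH] //; rewrite weight_cons ntwos_cons IH /=; lia. Qed.

Lemma blocks_cons_one r i (w : word r) : blocks (Some i :: w) = incr_nth (blocks w) 0.
Proof. by rewrite /=; case: (blocks w). Qed.

Lemma nth_blocks_rcons_one r (w : word r) i k :
  nth 0 (blocks (rcons w (Some i))) k = nth 0 (blocks w) k + (k == ntwos w).
Proof.
elim: w k => [|[j|] w IH] k; first by case: k => [|[|k]].
  by rewrite rcons_cons !blocks_cons_one !nth_incr_nth IH addnA.
by case: k => [|k] //=; rewrite IH.
Qed.

Lemma nth_blocks_rcons_two r (w : word r) k :
  k <= ntwos w -> nth 0 (blocks (rcons w None)) k = nth 0 (blocks w) k.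
Proof.
elim: w k => [|[j|] w IH] k; first by case: k.
  by move=> le_k; rewrite rcons_cons !blocks_cons_one !nth_incr_nth IH.
by case: k => [|k] //= le_k; rewrite IH.
Qed.

Lemma sum_blocks r (w : word r) :
  \sum_(0 <= k < (ntwos w).+1) nth 0 (blocks w) k = count is_one w.
Proof.
elim: w => [|[j|] w IH]; first by rewrite big_nat1.
  under eq_bigr do rewrite blocks_cons_one nth_incr_nth.
  by rewrite big_split /= IH big_nat_recl // big1.
by rewrite ntwos_cons big_nat_recl //= IH.
Qed.

Lemma beta_cons_one r i (u : word r) k : k < ntwos u -> beta (Some i :: u) k = beta u k.
Proof.
by move=> lt_k; rewrite /beta rev_cons nth_blocks_rcons_one /ntwos count_rev ltn_eqF ?addn0.
Qed.

Lemma beta_cons_two r (u : word r) k : k <= ntwos u -> beta (None :: u) k = beta u k.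
Proof. by move=> le_k; rewrite /beta rev_cons nth_blocks_rcons_two // /ntwos count_rev. Qed.

Lemma sum_beta r (u : word r) : \sum_(0 <= k < (ntwos u).+1) beta u k = count is_one u.
Proof. by rewrite -count_rev -sum_blocks /ntwos count_rev. Qed.

Lemma gfun_cons_one r i (u : word r) j : j <= ntwos u -> gfun (Some i :: u) j = gfun u j.
Proof.
move=> le_j; rewrite /gfun; congr (_ + _ - _); apply: eq_big_nat => k /andP[_ lt_k].
by rewrite beta_cons_one // (leq_trans lt_k).
Qed.

Lemma gfun_cons_two r (u : word r) j : j <= ntwos u -> gfun (None :: u) j = gfun u j.
Proof.
move=> le_j; rewrite /gfun; congr (_ + _ - _); apply: eq_big_nat => k /andP[_ lt_k].
by rewrite beta_cons_two // ltnW // (leq_trans lt_k).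
Qed.

Lemma gfun_cons_two_last r (u : word r) : gfun (None :: u) (ntwos u).+1 = (weight u).+1.
Proof.
have sum_eq : \sum_(0 <= k < (ntwos u).+1) beta (None :: u) k = count is_one u.
  by rewrite -sum_beta; apply: eq_big_nat => k /andP[_ lt_k]; rewrite beta_cons_two.
by rewrite /gfun sum_eq weight_count; lia.
Qed.

Lemma gprod_prod_gfun r (x : word r) : gprod x = \prod_(1 <= j < (ntwos x).+1) gfun x j.
Proof.
elim: x => [|[i|] u IH]; first by rewrite big_geq.
  by rewrite /= IH; apply: eq_big_nat => j /andP[_ le_j]; rewrite gfun_cons_one.
rewrite ntwos_cons /= IH add1n [RHS]big_nat_recr //= gfun_cons_two_last mulnC.
congr (_ * _).
by apply: eq_big_nat => j /andP[_ le_j]; rewrite gfun_cons_two.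
Qed.

Theorem mainTheorem4 (r : nat) (hr : 0 < r) (v : word r) :
  dpaths eps v = dpaths eps (sproj v) * r ^ ntwos v /\
  dpaths eps (sproj v) * r ^ ntwos v
    = r ^ ntwos v * \prod_(1 <= j < (ntwos v).+1) gfun v j.
Proof.
rewrite !dpaths_eps /path_count exp1n mul1n gprod_sproj gprod_prod_gfun.
by split; rewrite mulnC.
Qed.
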